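(* For all $\mu=(s,r,\epsilon)$ (with $s\ge0$, $\epsilon\ge0$) sufficiently close to $\mu_0=(0,\pi/4,0)$, one has $\mathcal{W}^\parallel_\mu(t)>0$ and $\mathcal{W}^\perp_\mu(t)>0$ for all $t\ge0$.
   Context: Fix $\varphi\in C^\infty(\mathbb{R})$ with $0\le\varphi\le1$, $\varphi(x)=0$ for $x\le0$, $\varphi(x)=1$ for $x\ge1$, and let $H$ be the Heaviside function ($H(x)=1$ for $x>0$, $H(x)=0$ for $x\le0$). For $r>0$, $\epsilon\ge0$ with $r+\epsilon<\pi/2$ and $\rho\ge0$ set $K^\parallel_{r,\epsilon}(\rho)=1-2\varphi((\rho-r)/\epsilon)$ if $\epsilon>0$ and $K^\parallel_{r,0}(\rho)=1-2H(\rho-r)$. Let $\mathcal{A}_{r,\epsilon}$ solve $\mathcal{A}''+K^\parallel_{r,\epsilon}\mathcal{A}=0$, $\mathcal{A}(0)=0$, $\mathcal{A}'(0)=1$ (for $\epsilon=0$: the unique $C^1$ function with these initial values solving the equation on $\rho\ne r$). For $\mu=(s,r,\epsilon)$, $\rho_\mu(t)$ is, for $s>0$, the solution of $\rho''=\frac{\mathcal{A}_{r,\epsilon}'(\rho)}{\mathcal{A}_{r,\epsilon}(\rho)}(1-(\rho')^2)$, $\rho(0)=s$, $\rho'(0)=0$, and $\rho_{0,r,\epsilon}(t)=t$. $K^\perp_{r,\epsilon}=\mathcal{A}_{r,\epsilon}^{-2}(1-(\mathcal{A}_{r,\epsilon}')^2)$, $K_\mu(t)=\rho_\mu'(t)^2K^\parallel_{r,\epsilon}(\rho_\mu(t))+(1-\rho_\mu'(t)^2)K^\perp_{r,\epsilon}(\rho_\mu(t))$.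 The stable solutions $\mathcal{Y}^\parallel_\mu,\mathcal{Y}^\perp_\mu$ are the unique solutions on $[0,\infty)$ (weak, i.e. $C^1$ and solving the equation off $t=\ell_r(s):=\arccos(\cos r/\cos s)$, when $\epsilon=0$) of $\mathcal{Y}''+K^\parallel_{r,\epsilon}(\rho_\mu(t))\mathcal{Y}=0$, resp. $\mathcal{Y}''+K_\mu(t)\mathcal{Y}=0$, with $\lim_{t\to\infty}e^t\mathcal{Y}(t)=1$. For $\mu$ near $\mu_0$ one has $\mathcal{Y}^\parallel_\mu(0)>0$, $\mathcal{Y}^\perp_\mu(0)>0$, and $\mathcal{W}^\parallel_\mu=\mathcal{Y}^\parallel_\mu/\mathcal{Y}^\parallel_\mu(0)$, $\mathcal{W}^\perp_\mu=\mathcal{Y}^\perp_\mu/\mathcal{Y}^\perp_\mu(0)$. *)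

From Stdlib Require Import Reals Lra.
Open Scope R_scope.

Definition smooth (f : R -> R) : Prop :=
  exists D : nat -> R -> R, D O = f /\
    forall n x, derivable_pt_lim (D n) x (D (S n) x).

Definition Heaviside (x : R) : R := if Rlt_dec 0 x then 1 else 0.

Definition Kpar (phi : R -> R) (r eps rho : R) : R :=
  if Rlt_dec 0 eps then 1 - 2 * phi ((rho - r) / eps)
  else 1 - 2 * Heaviside (rho - r).

Definition is_A (phi : R -> R) (r eps : R) (A dA : R -> R) : Prop :=
  A 0 = 0 /\ dA 0 = 1 /\
  (forall x, derivable_pt_lim A x (dA x)) /\
  (forall x, continuity_pt dA x) /\
  (forall x, (0 < eps \/ x <> r) ->
     derivable_pt_lim dA x (- Kpar phi r eps x * A x)).

Definition is_rho (A dA : R -> R) (s : R) (rho drho : R -> R) : Prop :=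
  (s = 0 -> forall t, rho t = t /\ drho t = 1) /\
  (0 < s ->
     rho 0 = s /\ drho 0 = 0 /\
     forall t, derivable_pt_lim rho t (drho t) /\
       derivable_pt_lim drho t (dA (rho t) / A (rho t) * (1 - (drho t) ^ 2))).

Definition Kperp (A dA : R -> R) (rho : R) : R :=
  (1 - (dA rho) ^ 2) / (A rho) ^ 2.

Definition Kmu (phi : R -> R) (r eps : R) (A dA rho drho : R -> R) (t : R) : R :=
  (drho t) ^ 2 * Kpar phi r eps (rho t)
  + (1 - (drho t) ^ 2) * Kperp A dA (rho t).

Definition ell (r s : R) : R := acos (cos r / cos s).

(* Stable solution on [0,oo) of Y'' + K Y = 0 (weak, i.e. C^1 and solving the
   equation off t = ell r s, when eps = 0), with lim_{t->oo} e^t Y(t) = 1. *)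
Definition is_stable (eps r s : R) (K : R -> R) (Y dY : R -> R) : Prop :=
  (forall e, 0 < e -> exists d, 0 < d /\
      forall t, 0 <= t < d -> Rabs (Y t - Y 0) < e) /\
  (forall t, 0 < t -> derivable_pt_lim Y t (dY t)) /\
  (forall t, 0 < t -> continuity_pt dY t) /\
  (forall t, 0 < t -> (0 < eps \/ t <> ell r s) ->
     derivable_pt_lim dY t (- K t * Y t)) /\
  (forall e, 0 < e -> exists T, forall t, T <= t ->
     Rabs (exp t * Y t - 1) < e).

Definition Wnorm (Y : R -> R) (t : R) : R := Y t / Y 0.

(* On an interval [[T, oo)] where [K <= 0], a solution of [Y'' + K Y = 0] with
   [e^t Y(t) -> 1] is convex while positive, hence positive with [Y' < 0] all the
   way back to [T]; on [(0, T]], with [K <= 1] and [T < pi/2], Sturm comparison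
   with [cos (t - T)] gives [Y(t) >= Y(T) cos T > 0].  So it suffices to check
   both potentials against these bounds with [T = 11/10].
   [K^par <= 1] always, and [K^perp <= 1] because [A^2 + A'^2 >= 1]: the energy
   only grows, since [A, A' > 0] and [K^par <= 1].  For [s] small the geodesic
   [rho] starts almost radially: below [r] it runs on the round sphere, where
   [cos rho = cos s cos t], so it reaches [r] before time 1; afterwards Clairaut's
   relation [A(rho)^2 (1 - rho'^2) = sin^2 s] forces [rho' >= 9/10].  Hence from
   time [11/10] on, [rho > r + eps], where [K^par = -1], and [rho'^2 >= 1/2],
   which makes [K_mu <= 0]. *)

From Stdlib Require Import Reals Lra.
Open Scope R_scope.

(* The Stdlib rules for [derivable_pt_lim], restated for functions written as
   lambda terms so that [apply] infers the factors by higher-order matching. *)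
Lemma dlim_eq f x l l' : derivable_pt_lim f x l -> l = l' -> derivable_pt_lim f x l'.
Proof. now intros H <-. Qed.

Lemma dlim_const c x : derivable_pt_lim (fun _ => c) x 0.
Proof. apply derivable_pt_lim_const. Qed.

Lemma dlim_id x : derivable_pt_lim (fun y => y) x 1.
Proof. apply derivable_pt_lim_id. Qed.

Lemma dlim_opp f x a : derivable_pt_lim f x a -> derivable_pt_lim (fun y => - f y) x (- a).
Proof. apply derivable_pt_lim_opp. Qed.

Lemma dlim_plus f g x a b : derivable_pt_lim f x a -> derivable_pt_lim g x b ->
  derivable_pt_lim (fun y => f y + g y) x (a + b).
Proof. apply derivable_pt_lim_plus. Qed.

Lemma dlim_minus f g x a b : derivable_pt_lim f x a -> derivable_pt_lim g x b ->
  derivable_pt_lim (fun y => f y - g y) x (a - b).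
Proof. apply derivable_pt_lim_minus. Qed.

Lemma dlim_mult f g x a b : derivable_pt_lim f x a -> derivable_pt_lim g x b ->
  derivable_pt_lim (fun y => f y * g y) x (a * g x + f x * b).
Proof. apply derivable_pt_lim_mult. Qed.

Lemma dlim_div f g x a b : derivable_pt_lim f x a -> derivable_pt_lim g x b -> g x <> 0 ->
  derivable_pt_lim (fun y => f y / g y) x ((a * g x - b * f x) / (g x)²).
Proof. apply derivable_pt_lim_div. Qed.

Lemma dlim_comp f g x a b : derivable_pt_lim g x a -> derivable_pt_lim f (g x) b ->
  derivable_pt_lim (fun y => f (g y)) x (b * a).
Proof. apply derivable_pt_lim_comp. Qed.

Lemma dlim_continuity_pt f x l : derivable_pt_lim f x l -> continuity_pt f x.
Proof. intro H. apply derivable_continuous_pt. now exists l. Qed.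

Lemma dlim_cos_shift T x : derivable_pt_lim (fun y => cos (y - T)) x (- sin (x - T)).
Proof.
  eapply dlim_eq.
  - apply (dlim_comp cos (fun y => y - T)).
    + apply dlim_minus; [apply dlim_id | apply dlim_const].
    + apply derivable_pt_lim_cos.
  - ring.
Qed.

Lemma dlim_sin_shift T x : derivable_pt_lim (fun y => sin (y - T)) x (cos (x - T)).
Proof.
  eapply dlim_eq.
  - apply (dlim_comp sin (fun y => y - T)).
    + apply dlim_minus; [apply dlim_id | apply dlim_const].
    + apply derivable_pt_lim_sin.
  - ring.
Qed.

Lemma continuity_pt_cst c x : continuity_pt (fun _ => c) x.
Proof. apply derivable_continuous_pt, derivable_pt_const. Qed.

Lemma nondecr_of_derive_nonneg (f df : R -> R) a b :
  a <= b -> (forall x, a <= x <= b -> continuity_pt f x) ->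
  (forall x, a < x < b -> derivable_pt_lim f x (df x) /\ 0 <= df x) ->
  f a <= f b.
Proof.
  intros Hab Hc Hd.
  destruct (Req_dec a b) as [<- | Hne]; [lra |].
  set (pr := fun c (P : a < c < b) =>
               exist (fun l => derivable_pt_lim f c l) (df c) (proj1 (Hd c P))).
  destruct (MVT f id a b pr (fun c _ => derivable_pt_id c) ltac:(lra) Hc
              (fun c _ => derivable_continuous_pt id c (derivable_pt_id c)))
    as [c [P HP]].
  rewrite derive_pt_id in HP. simpl in HP. unfold id in HP.
  pose proof (proj2 (Hd c P)).
  assert (0 <= (b - a) * df c) by (apply Rmult_le_pos; lra).
  lra.
Qed.

(* One exceptional point [p], where [f] need not be differentiable, is allowed:
   this is how the weak (C^1, piecewise C^2) solutions are handled. *)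
Lemma nondecr_of_derive_nonneg_except (f df : R -> R) a b p :
  a <= b -> (forall x, a <= x <= b -> continuity_pt f x) ->
  (forall x, a < x < b -> x <> p -> derivable_pt_lim f x (df x) /\ 0 <= df x) ->
  f a <= f b.
Proof.
  intros Hab Hc Hd.
  assert (Hsub : forall u v, a <= u <= v -> v <= b -> (u < p -> p < v -> False) -> f u <= f v).
  { intros u v Huv Hvb Hp. apply (nondecr_of_derive_nonneg f df); [lra | |].
    - intros; apply Hc; lra.
    - intros x Hx; apply Hd; [lra |]. intros ->. apply Hp; lra. }
  destruct (Rlt_dec a p); [destruct (Rlt_dec p b) |].
  - apply Rle_trans with (f p); apply Hsub; lra.
  - apply Hsub; lra.
  - apply Hsub; lra.
Qed.

Lemma eq_of_derive0_except (f : R -> R) a b p :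
  a <= b -> (forall x, a <= x <= b -> continuity_pt f x) ->
  (forall x, a < x < b -> x <> p -> derivable_pt_lim f x 0) ->
  f a = f b.
Proof.
  intros Hab Hc Hd.
  assert (f a <= f b).
  { apply (nondecr_of_derive_nonneg_except f (fun _ => 0) a b p Hab Hc).
    intros x Hx Hxp. split; [apply Hd | lra]; assumption. }
  assert (- f a <= - f b).
  { apply (nondecr_of_derive_nonneg_except (fun x => - f x) (fun _ => - 0) a b p Hab).
    - intros x Hx. now apply continuity_pt_opp, Hc.
    - intros x Hx Hxp. split; [apply dlim_opp, Hd | lra]; assumption. }
  lra.
Qed.

(* Continuous induction: the supremum of the points where [f <= 0] would be
   such a point, by continuity, while [f > 0] to its right. *)
Lemma pos_on_interval_backward (f : R -> R) a b :
  a <= b -> (forall x, a <= x <= b -> continuity_pt f x) -> 0 < f b ->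
  (forall c, a <= c < b -> (forall x, c < x <= b -> 0 < f x) -> 0 < f c) ->
  forall x, a <= x <= b -> 0 < f x.
Proof.
  intros Hab Hc Hb Hstep x0 Hx0.
  destruct (Rlt_or_le 0 (f x0)) as [| Hneg]; [assumption | exfalso].
  set (Z := fun x => a <= x <= b /\ f x <= 0).
  destruct (completeness Z) as [m [Hub Hlub]].
  { exists b. intros y [Hy _]. lra. }
  { exists x0. split; assumption. }
  assert (x0 <= m) by (apply Hub; split; assumption).
  assert (m <= b) by (apply Hlub; intros y [Hy _]; lra).
  assert (Hright : forall x, m < x <= b -> 0 < f x).
  { intros x Hx. destruct (Rlt_or_le 0 (f x)) as [| Hf]; [assumption |].
    assert (x <= m) by (apply Hub; split; [lra | assumption]). lra. }
  assert (Hfm : f m <= 0).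
  { destruct (Rlt_or_le 0 (f m)) as [Hfm |]; [| assumption].
    destruct (Hc m ltac:(lra) (f m) Hfm) as [d [Hd Hnear]].
    assert (Hub' : is_upper_bound Z (m - d / 2)).
    { intros y [Hy Hfy]. destruct (Rle_or_lt y (m - d / 2)) as [| Hy2]; [assumption | exfalso].
      destruct (Req_dec y m) as [-> | Hym]; [lra |].
      assert (y <= m) by (apply Hub; split; assumption).
      assert (Hdist : Rabs (f y - f m) < f m).
      { apply Hnear. split; [split; [exact I | auto] |].
        simpl. unfold R_dist. rewrite Rabs_left by lra. lra. }
      apply Rabs_def2 in Hdist. lra. }
    specialize (Hlub _ Hub'). lra. }
  destruct (Req_dec m b) as [-> | Hmb]; [lra |].
  assert (0 < f m) by (apply Hstep; [lra | exact Hright]). lra.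
Qed.

Lemma pos_on_interval_forward (f : R -> R) a b :
  a <= b -> (forall x, a <= x <= b -> continuity_pt f x) -> 0 < f a ->
  (forall c, a < c <= b -> (forall x, a <= x < c -> 0 < f x) -> 0 < f c) ->
  forall x, a <= x <= b -> 0 < f x.
Proof.
  intros Hab Hc Ha Hstep x Hx.
  replace x with (- - x) by ring.
  apply (pos_on_interval_backward (fun y => f (- y)) (- b) (- a)); [lra | | | | lra].
  - intros y Hy. apply (continuity_pt_comp Ropp f).
    + apply continuity_pt_opp, derivable_continuous_pt, derivable_pt_id.
    + apply Hc. lra.
  - now rewrite Ropp_involutive.
  - intros c Hc1 Hc2. apply Hstep; [lra |].
    intros y Hy. replace y with (- - y) by ring. apply Hc2. lra.
Qed.
Section StableSolution.

Variables (K Y dY : R -> R) (p T : R).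
Hypothesis HT : 0 < T < PI / 2.
Hypothesis HY : forall t, 0 < t -> derivable_pt_lim Y t (dY t).
Hypothesis HdYc : forall t, 0 < t -> continuity_pt dY t.
Hypothesis HdY : forall t, 0 < t -> t <> p -> derivable_pt_lim dY t (- K t * Y t).
Hypothesis Hdecay : forall e, 0 < e -> exists T1, forall t, T1 <= t -> Rabs (exp t * Y t - 1) < e.
Hypothesis HK_tail : forall t, T <= t -> K t <= 0.

Lemma Y_continuity_pt t : 0 < t -> continuity_pt Y t.
Proof. intro Ht. eapply dlim_continuity_pt. now apply HY. Qed.

Lemma exp_Y_bounds : exists T0, T <= T0 /\ forall t, T0 <= t -> 1/2 < exp t * Y t < 3/2.
Proof.
  destruct (Hdecay (1/2) ltac:(lra)) as [T0 HT0].
  exists (Rmax T T0). split; [apply Rmax_l |].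
  intros t Ht. pose proof (Rmax_r T T0).
  specialize (HT0 t ltac:(lra)). apply Rabs_def2 in HT0. lra.
Qed.

Lemma Y_pos_of_exp_bound t : 1/2 < exp t * Y t -> 0 < Y t.
Proof.
  intro H. pose proof (exp_pos t).
  destruct (Rlt_or_le 0 (Y t)) as [| Hn]; [assumption |].
  assert (exp t * Y t <= 0) by (rewrite <- (Rmult_0_r (exp t)); apply Rmult_le_compat_l; lra).
  lra.
Qed.

Lemma dY_nondecr a b : T <= a <= b -> (forall x, a < x < b -> 0 < Y x) -> dY a <= dY b.
Proof.
  intros Hab Hpos.
  apply (nondecr_of_derive_nonneg_except dY (fun x => - K x * Y x) a b p); [lra | |].
  - intros; apply HdYc; lra.
  - intros x Hx Hxp. split; [apply HdY; [lra | assumption] |].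
    specialize (HK_tail x ltac:(lra)). specialize (Hpos x Hx). nra.
Qed.

(* A positive convex function with [dY >= 0] somewhere cannot decay like [e^-t]. *)
Lemma dY_neg_far T0 : T <= T0 -> (forall t, T0 <= t -> 1/2 < exp t * Y t < 3/2) -> dY T0 < 0.
Proof.
  intros HT0 Hb.
  assert (Hpos : forall t, T0 <= t -> 0 < Y t) by (intros t Ht; apply Y_pos_of_exp_bound, Hb, Ht).
  destruct (Rlt_or_le (dY T0) 0) as [| Hge]; [assumption | exfalso].
  assert (Hmin : forall x, T0 <= x -> Y T0 <= Y x).
  { intros x Hx. apply (nondecr_of_derive_nonneg_except Y dY T0 x p); [lra | |].
    - intros; apply Y_continuity_pt; lra.
    - intros y Hy _. split; [apply HY; lra |].
      apply Rle_trans with (dY T0); [assumption |].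
      apply dY_nondecr; [lra |]. intros z Hz. apply Hpos; lra. }
  pose proof (Hpos T0 ltac:(lra)).
  set (x := Rmax T0 (3 / (2 * Y T0))).
  assert (Hx1 : T0 <= x) by apply Rmax_l.
  assert (Hx2 : 3 / (2 * Y T0) <= x) by apply Rmax_r.
  assert (1 + x < exp x) by (apply exp_ineq1; lra).
  assert (3/2 <= x * Y T0).
  { apply Rle_trans with (3 / (2 * Y T0) * Y T0).
    - right. field. lra.
    - apply Rmult_le_compat_r; lra. }
  assert (exp x * Y T0 <= exp x * Y x) by (apply Rmult_le_compat_l; [left; apply exp_pos | auto]).
  pose proof (Hb x Hx1). nra.
Qed.

Lemma Y_pos_dY_neg_tail : (forall t, T <= t -> 0 < Y t) /\ dY T < 0.
Proof.
  destruct exp_Y_bounds as [T0 [HT0 Hb]].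
  assert (Hfar : forall t, T0 <= t -> 0 < Y t) by (intros t Ht; apply Y_pos_of_exp_bound, Hb, Ht).
  pose proof (dY_neg_far T0 HT0 Hb) as HdT0.
  assert (Hmid : forall t, T <= t <= T0 -> 0 < Y t).
  { apply pos_on_interval_backward; [lra | intros; apply Y_continuity_pt; lra | apply Hfar; lra |].
    intros c Hc Hpos.
    assert (- Y c <= - Y T0); [| pose proof (Hfar T0 ltac:(lra)); lra].
    apply (nondecr_of_derive_nonneg_except (fun x => - Y x) (fun x => - dY x) c T0 p); [lra | |].
    - intros x Hx. apply continuity_pt_opp, Y_continuity_pt; lra.
    - intros x Hx _. split; [apply dlim_opp, HY; lra |].
      assert (dY x <= dY T0) by (apply dY_nondecr; [lra |]; intros; apply Hpos; lra).
      lra. }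
  split.
  - intros t Ht. destruct (Rle_or_lt t T0); [apply Hmid | apply Hfar]; lra.
  - apply Rle_lt_trans with (dY T0); [| exact HdT0].
    apply dY_nondecr; [lra |]. intros; apply Hmid; lra.
Qed.

Hypothesis HK_head : forall t, 0 < t < T -> K t <= 1.

(* Sturm comparison with the solution [cos (t - T)] of [u'' + u = 0]: their
   Wronskian-like combination is nondecreasing as long as [K <= 1] and [Y > 0]. *)
Lemma cos_wronskian_le c x : 0 < c <= x -> x <= T -> (forall y, c < y <= T -> 0 < Y y) ->
  dY x * cos (x - T) + Y x * sin (x - T) <= dY T.
Proof.
  intros Hc HxT Hpos.
  set (W := fun y => dY y * cos (y - T) + Y y * sin (y - T)).
  replace (dY T) with (W T)
    by (unfold W; rewrite Rminus_diag, cos_0, sin_0; ring).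
  apply (nondecr_of_derive_nonneg_except W (fun y => (1 - K y) * Y y * cos (y - T)) x T p);
    [lra | |].
  - intros y Hy. unfold W. apply continuity_pt_plus; apply continuity_pt_mult.
    + apply HdYc; lra.
    + apply (dlim_continuity_pt _ _ _ (dlim_cos_shift T y)).
    + apply Y_continuity_pt; lra.
    + apply (dlim_continuity_pt _ _ _ (dlim_sin_shift T y)).
  - intros y Hy Hyp. split.
    + unfold W. eapply dlim_eq.
      * apply dlim_plus; apply dlim_mult;
          [apply HdY; [lra | exact Hyp] | apply dlim_cos_shift | apply HY; lra | apply dlim_sin_shift].
      * cbv beta. ring.
    + assert (0 < cos (y - T)) by (apply cos_gt_0; lra).
      specialize (HK_head y ltac:(lra)). specialize (Hpos y ltac:(lra)).
      apply Rmult_le_pos; [nra | lra].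
Qed.

Lemma Y_ge_cos c : 0 < c <= T -> (forall x, c < x <= T -> 0 < Y x) ->
  Y T * cos (c - T) <= Y c.
Proof.
  intros Hc Hpos.
  assert (Hcos : forall x, c <= x <= T -> 0 < cos (x - T)) by (intros; apply cos_gt_0; lra).
  assert (HdT := proj2 Y_pos_dY_neg_tail).
  assert (Hq : - (Y c / cos (c - T)) <= - (Y T / cos (T - T))).
  { apply (nondecr_of_derive_nonneg_except (fun x => - (Y x / cos (x - T)))
             (fun x => - ((dY x * cos (x - T) + Y x * sin (x - T)) / (cos (x - T))²)) c T p);
      [lra | |].
    - intros y Hy. apply continuity_pt_opp, continuity_pt_div.
      + apply Y_continuity_pt; lra.
      + apply (dlim_continuity_pt _ _ _ (dlim_cos_shift T y)).
      + pose proof (Hcos y Hy). lra.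
    - intros y Hy _. pose proof (Hcos y ltac:(lra)). split.
      + apply dlim_opp. eapply dlim_eq.
        * apply dlim_div; [apply HY; lra | apply dlim_cos_shift | lra].
        * cbv beta. field. unfold Rsqr. nra.
      + pose proof (cos_wronskian_le c y ltac:(lra) ltac:(lra) Hpos).
        assert (0 < (cos (y - T))²) by (unfold Rsqr; nra).
        assert ((dY y * cos (y - T) + Y y * sin (y - T)) / (cos (y - T))² < 0)
          by (apply Rdiv_neg_pos; lra).
        lra. }
  rewrite Rminus_diag, cos_0, Rdiv_1_r in Hq.
  pose proof (Hcos c ltac:(lra)).
  apply Rmult_le_reg_r with (/ cos (c - T)); [now apply Rinv_0_lt_compat |].
  replace (Y T * cos (c - T) * / cos (c - T)) with (Y T) by (field; lra).
  exact (Ropp_le_cancel _ _ Hq).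
Qed.

Lemma Y_ge_YT_cosT t : 0 < t <= T -> 0 < Y T * cos T <= Y t.
Proof.
  intro Ht.
  pose proof (proj1 Y_pos_dY_neg_tail T ltac:(lra)) as HYT.
  assert (HcT : 0 < cos T) by (apply cos_gt_0; lra).
  assert (Hcos : forall c, 0 <= c <= T -> cos T <= cos (c - T)).
  { intros c Hc. replace (cos (c - T)) with (cos (T - c)) by (rewrite <- cos_neg; f_equal; ring).
    destruct (Req_dec c 0) as [-> | Hc0]; [rewrite Rminus_0_r; lra |].
    left. apply cos_decreasing_1; lra. }
  assert (Hhead : forall x, t <= x <= T -> 0 < Y x).
  { apply (pos_on_interval_backward Y t T); [lra | | exact HYT |].
    - intros; apply Y_continuity_pt; lra.
    - intros c Hc Hpos. pose proof (Y_ge_cos c ltac:(lra) Hpos).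
      pose proof (Hcos c ltac:(lra)). nra. }
  pose proof (Y_ge_cos t Ht ltac:(intros; apply Hhead; lra)).
  pose proof (Hcos t ltac:(lra)). split; nra.
Qed.

Hypothesis Hright0 : forall e, 0 < e -> exists d, 0 < d /\
  forall t, 0 <= t < d -> Rabs (Y t - Y 0) < e.

Lemma stable_solution_pos t : 0 <= t -> 0 < Y t.
Proof.
  intro Ht.
  destruct (Rlt_or_le T t); [apply (proj1 Y_pos_dY_neg_tail); lra |].
  destruct (Req_dec t 0) as [-> | Ht0]; [| pose proof (Y_ge_YT_cosT t ltac:(lra)); lra].
  pose proof (Y_ge_YT_cosT T ltac:(lra)) as [Hm _].
  destruct (Rlt_or_le 0 (Y 0)) as [| Hn]; [assumption | exfalso].
  destruct (Hright0 (Y T * cos T - Y 0) ltac:(lra)) as [d [Hd Hnear]].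
  set (t1 := Rmin (d / 2) T).
  assert (0 < t1) by (apply Rmin_glb_lt; lra).
  assert (t1 <= d / 2) by apply Rmin_l. assert (t1 <= T) by apply Rmin_r.
  specialize (Hnear t1 ltac:(lra)). apply Rabs_def2 in Hnear.
  pose proof (Y_ge_YT_cosT t1 ltac:(lra)). lra.
Qed.

End StableSolution.

Lemma is_stable_Wnorm_pos eps r s K Y dY T :
  0 < T < PI / 2 -> is_stable eps r s K Y dY ->
  (forall t, 0 < t < T -> K t <= 1) -> (forall t, T <= t -> K t <= 0) ->
  forall t, 0 <= t -> 0 < Wnorm Y t.
Proof.
  intros HT [Hright0 [HY [HdYc [HdY Hdecay]]]] HK_head HK_tail t Ht.
  assert (Hpos : forall t, 0 <= t -> 0 < Y t).
  { apply (stable_solution_pos K Y dY (ell r s) T); auto. }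
  unfold Wnorm. apply Rdiv_lt_0_compat; apply Hpos; lra.
Qed.

Lemma Kpar_le1 phi r eps x : (forall x, 0 <= phi x <= 1) -> Kpar phi r eps x <= 1.
Proof.
  intro Hrange. unfold Kpar, Heaviside.
  destruct (Rlt_dec 0 eps); [specialize (Hrange ((x - r) / eps)); lra |].
  destruct (Rlt_dec 0 (x - r)); lra.
Qed.

Lemma Kpar_left phi r eps x : (forall x, x <= 0 -> phi x = 0) -> 0 <= eps -> x <= r ->
  Kpar phi r eps x = 1.
Proof.
  intros Hleft He Hx. unfold Kpar, Heaviside.
  destruct (Rlt_dec 0 eps).
  - rewrite Hleft; [ring |]. apply Rmult_le_reg_r with eps; [lra |].
    unfold Rdiv. rewrite Rmult_assoc, Rinv_l by lra. lra.
  - destruct (Rlt_dec 0 (x - r)); lra.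
Qed.

Lemma Kpar_right phi r eps x : (forall x, 1 <= x -> phi x = 1) -> 0 <= eps -> r + eps < x ->
  Kpar phi r eps x = -1.
Proof.
  intros Hright He Hx. unfold Kpar, Heaviside.
  destruct (Rlt_dec 0 eps).
  - rewrite Hright; [ring |]. apply Rmult_le_reg_r with eps; [lra |].
    unfold Rdiv. rewrite Rmult_assoc, Rinv_l by lra. lra.
  - destruct (Rlt_dec 0 (x - r)); lra.
Qed.

Lemma sum_sqr_eq0 a b : a * a + b * b = 0 -> a = 0 /\ b = 0.
Proof.
  intro H. pose proof (Rle_0_sqr a). pose proof (Rle_0_sqr b). unfold Rsqr in *.
  split; apply Rsqr_0_uniq; unfold Rsqr; lra.
Qed.

(* [f'' = f] beyond [a]: [(f + f') e^-x] and [(f' - f) e^x] are constant, so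
   the growing mode dominates from [a] on. *)
Lemma pos_of_cosh_ode (f df : R -> R) a :
  (forall x, derivable_pt_lim f x (df x)) -> (forall x, continuity_pt df x) ->
  (forall x, a < x -> derivable_pt_lim df x (f x)) ->
  0 < f a -> 0 < df a -> forall x, a <= x -> 0 < f x /\ 0 < df x.
Proof.
  intros Hf Hdfc Hdf Hfa Hdfa x Hx.
  assert (Hfc : forall y, continuity_pt f y) by (intro y; eapply dlim_continuity_pt, Hf).
  assert (Hexpc : forall y, continuity_pt exp y) by (intro; apply derivable_continuous_pt, derivable_pt_exp).
  assert (Hgrow : (f a + df a) * exp (- a) = (f x + df x) * exp (- x)).
  { apply (eq_of_derive0_except (fun y => (f y + df y) * exp (- y)) a x a); [lra | |].
    - intros y _. apply continuity_pt_mult; [now apply continuity_pt_plus |].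
      apply (continuity_pt_comp Ropp exp); [| auto].
      apply continuity_pt_opp, derivable_continuous_pt, derivable_pt_id.
    - intros y Hy _. eapply dlim_eq.
      + apply dlim_mult; [apply dlim_plus; [apply Hf | apply Hdf; lra] |].
        apply (dlim_comp exp Ropp); [apply dlim_opp, dlim_id | apply derivable_pt_lim_exp].
      + cbv beta. ring. }
  assert (Hdecay : (df a - f a) * exp a = (df x - f x) * exp x).
  { apply (eq_of_derive0_except (fun y => (df y - f y) * exp y) a x a); [lra | |].
    - intros y _. apply continuity_pt_mult; [now apply continuity_pt_minus | auto].
    - intros y Hy _. eapply dlim_eq.
      + apply dlim_mult; [apply dlim_minus; [apply Hdf; lra | apply Hf] |].
        apply derivable_pt_lim_exp.
      + cbv beta. ring. }
  assert (He : 1 <= exp (x - a)).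
  { rewrite <- exp_0. destruct (Req_dec x a) as [-> | ]; [rewrite Rminus_diag; lra |].
    left. apply exp_increasing. lra. }
  assert (Hinv : forall y, exp y * exp (- y) = 1)
    by (intro y; rewrite <- exp_plus, Rplus_opp_r; apply exp_0).
  assert (Hxa : exp (x - a) = exp x * exp (- a)) by (unfold Rminus; apply exp_plus).
  assert (Hsum : f x + df x = (f a + df a) * exp (x - a)).
  { rewrite Hxa. transitivity ((f x + df x) * exp (- x) * exp x).
    - rewrite Rmult_assoc, (Rmult_comm (exp (- x))), Hinv. ring.
    - rewrite <- Hgrow. ring. }
  assert (Hdiff : (df x - f x) * exp (x - a) = df a - f a).
  { rewrite Hxa. transitivity ((df x - f x) * exp x * exp (- a)); [ring |].
    rewrite <- Hdecay, Rmult_assoc, Hinv. ring. }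
  assert (Rabs (df x - f x) < f x + df x).
  { rewrite Hsum. apply Rle_lt_trans with (Rabs (df a - f a)).
    - rewrite <- Hdiff, Rabs_mult, (Rabs_right (exp (x - a))) by lra.
      rewrite <- (Rmult_1_r (Rabs (df x - f x))) at 1.
      apply Rmult_le_compat_l; [apply Rabs_pos | lra].
    - apply Rlt_le_trans with (f a + df a); [apply Rabs_def1; lra | nra]. }
  match goal with H : Rabs _ < _ |- _ => apply Rabs_def2 in H end. lra.
Qed.

Section Profile.

Variables (phi : R -> R) (r eps : R) (A dA : R -> R).
Hypothesis Hrange : forall x, 0 <= phi x <= 1.
Hypothesis Hleft : forall x, x <= 0 -> phi x = 0.
Hypothesis Hright : forall x, 1 <= x -> phi x = 1.
Hypothesis Hr : 0 < r.
Hypothesis Heps : 0 <= eps.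
Hypothesis Hreps : r + eps < 1.
Hypothesis HA : is_A phi r eps A dA.

Lemma A_derive x : derivable_pt_lim A x (dA x).
Proof. apply HA. Qed.

Lemma dA_derive x : x <> r -> derivable_pt_lim dA x (- Kpar phi r eps x * A x).
Proof. intro Hx. apply HA. now right. Qed.

Lemma A_continuity_pt x : continuity_pt A x.
Proof. eapply dlim_continuity_pt, A_derive. Qed.

Lemma dA_continuity_pt x : continuity_pt dA x.
Proof. apply HA. Qed.

Lemma A_eq_sin x : 0 <= x <= r -> A x = sin x /\ dA x = cos x.
Proof.
  intro Hx. destruct HA as [HA0 [HdA0 _]].
  set (E := fun y => (A y - sin y) * (A y - sin y) + (dA y - cos y) * (dA y - cos y)).
  assert (HE : E 0 = E x).
  { apply (eq_of_derive0_except E 0 x r); [lra | |].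
    - intros y _. unfold E.
      apply continuity_pt_plus; apply continuity_pt_mult; apply continuity_pt_minus;
        auto using A_continuity_pt, dA_continuity_pt, continuity_sin, continuity_cos.
    - intros y Hy Hyr. unfold E. eapply dlim_eq.
      + apply dlim_plus; apply dlim_mult; apply dlim_minus;
          auto using A_derive, dA_derive, derivable_pt_lim_sin, derivable_pt_lim_cos.
      + rewrite (Kpar_left phi r eps y Hleft Heps ltac:(lra)). cbv beta. ring. }
  unfold E in HE. rewrite HA0, HdA0, sin_0, cos_0 in HE.
  destruct (sum_sqr_eq0 (A x - sin x) (dA x - cos x)) as [H1 H2]; [lra |].
  split; lra.
Qed.

(* Sturm comparison of [A] with [sin], a solution of [u'' + u = 0], using [Kpar <= 1]. *)
Lemma A_sin_wronskian x : 0 <= x < PI -> (forall y, 0 < y < x -> 0 <= A y) ->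
  A x * cos x <= dA x * sin x.
Proof.
  intros Hx HAy. destruct HA as [HA0 _].
  set (W := fun y => dA y * sin y - A y * cos y).
  assert (W 0 <= W x); [| unfold W in *; rewrite HA0, sin_0 in *; lra].
  apply (nondecr_of_derive_nonneg_except W (fun y => (1 - Kpar phi r eps y) * A y * sin y) 0 x r);
    [lra | |].
  - intros y _. unfold W. apply continuity_pt_minus; apply continuity_pt_mult;
      auto using A_continuity_pt, dA_continuity_pt, continuity_sin, continuity_cos.
  - intros y Hy Hyr. split.
    + unfold W. eapply dlim_eq.
      * apply dlim_minus; apply dlim_mult;
          auto using A_derive, dA_derive, derivable_pt_lim_sin, derivable_pt_lim_cos.
      * cbv beta. ring.
    + pose proof (Kpar_le1 phi r eps y Hrange). pose proof (HAy y Hy).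
      assert (0 < sin y) by (apply sin_gt_0; lra).
      apply Rmult_le_pos; [apply Rmult_le_pos |]; lra.
Qed.

Lemma dA_pos_of_A_pos x : 0 < x < PI / 2 -> (forall y, 0 < y < x -> 0 <= A y) -> 0 < A x ->
  0 < dA x.
Proof.
  intros Hx HAy HAx. pose proof PI2_Rlt_PI.
  pose proof (A_sin_wronskian x ltac:(lra) HAy).
  assert (0 < sin x) by (apply sin_gt_0; lra).
  assert (0 < cos x) by (apply cos_gt_0; lra).
  assert (0 < A x * cos x) by (apply Rmult_lt_0_compat; lra).
  destruct (Rlt_or_le 0 (dA x)) as [| Hn]; [assumption |].
  assert (dA x * sin x <= 0) by nra. lra.
Qed.

Lemma A_pos_head x : 0 < x < PI / 2 -> 0 < A x.
Proof.
  intro Hx.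
  assert (Hsin : forall y, 0 < y <= r -> 0 < A y).
  { intros y Hy. rewrite (proj1 (A_eq_sin y ltac:(lra))). pose proof PI2_3_2.
    apply sin_gt_0; lra. }
  destruct (Rle_or_lt x r) as [| Hxr]; [now apply Hsin |].
  apply (pos_on_interval_forward A r x); [lra | auto using A_continuity_pt | apply Hsin; lra | | lra].
  intros c Hc Hpos.
  assert (A r <= A c); [| pose proof (Hsin r ltac:(lra)); lra].
  apply (nondecr_of_derive_nonneg_except A dA r c r); [lra | auto using A_continuity_pt |].
  intros y Hy _. split; [apply A_derive |]. left.
  apply dA_pos_of_A_pos; [lra | | apply Hpos; lra].
  intros z Hz. left. destruct (Rle_or_lt z r); [apply Hsin | apply Hpos]; lra.
Qed.

Lemma A_dA_pos x : 0 < x -> 0 < A x /\ 0 < dA x.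
Proof.
  intro Hx. pose proof PI2_3_2.
  assert (Hhead : forall y, 0 < y < PI / 2 -> 0 < A y /\ 0 < dA y).
  { intros y Hy. pose proof (A_pos_head y Hy). split; [assumption |].
    apply dA_pos_of_A_pos; [lra | | assumption].
    intros z Hz. left. apply A_pos_head. lra. }
  destruct (Rlt_or_le x 1); [apply Hhead; lra |].
  apply (pos_of_cosh_ode A dA 1); auto using A_derive, dA_continuity_pt.
  - intros y Hy. eapply dlim_eq; [apply dA_derive; lra |].
    rewrite (Kpar_right phi r eps y Hright Heps ltac:(lra)). ring.
  - apply Hhead; lra.
  - apply Hhead; lra.
Qed.

Lemma A_energy_ge1 x : 0 <= x -> 1 <= A x ^ 2 + dA x ^ 2.
Proof.
  intro Hx. destruct HA as [HA0 [HdA0 _]].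
  replace 1 with (A 0 ^ 2 + dA 0 ^ 2) by (rewrite HA0, HdA0; ring).
  apply (nondecr_of_derive_nonneg_except (fun y => A y ^ 2 + dA y ^ 2)
           (fun y => 2 * A y * dA y * (1 - Kpar phi r eps y)) 0 x r); [lra | |].
  - intros y _. apply continuity_pt_plus; simpl; repeat apply continuity_pt_mult;
      auto using A_continuity_pt, dA_continuity_pt, continuity_pt_cst.
  - intros y Hy Hyr. split.
    + eapply dlim_eq.
      * apply dlim_plus; simpl; repeat apply dlim_mult; auto using dlim_const, A_derive, dA_derive.
      * cbv beta. ring.
    + destruct (A_dA_pos y ltac:(lra)). pose proof (Kpar_le1 phi r eps y Hrange).
      apply Rmult_le_pos; [apply Rmult_le_pos |]; lra.
Qed.

Lemma A_nondecr x y : 0 <= x <= y -> A x <= A y.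
Proof.
  intro Hxy. apply (nondecr_of_derive_nonneg_except A dA x y x); [lra | auto using A_continuity_pt |].
  intros z Hz _. split; [apply A_derive | left; apply A_dA_pos; lra].
Qed.

Lemma Kperp_le1 x : 0 < x -> Kperp A dA x <= 1.
Proof.
  intro Hx. destruct (A_dA_pos x Hx) as [HAx _]. pose proof (A_energy_ge1 x ltac:(lra)).
  unfold Kperp. apply Rmult_le_reg_r with (A x ^ 2); [nra |].
  unfold Rdiv. rewrite Rmult_assoc, Rinv_l by nra. lra.
Qed.


Section Trajectory.

Variables (s : R) (rho drho : R -> R).
Hypothesis Hs : 0 < s < 1/100.
Hypothesis Hr_lo : PI / 6 <= r.
Hypothesis Heps_small : eps < 1/100.
Hypothesis Hrho0 : rho 0 = s.
Hypothesis Hdrho0 : drho 0 = 0.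
Hypothesis Hrho : forall t, derivable_pt_lim rho t (drho t) /\
  derivable_pt_lim drho t (dA (rho t) / A (rho t) * (1 - drho t ^ 2)).

Lemma rho_continuity_pt t : continuity_pt rho t.
Proof. eapply dlim_continuity_pt, Hrho. Qed.

Lemma drho_continuity_pt t : continuity_pt drho t.
Proof. eapply dlim_continuity_pt, Hrho. Qed.

Lemma rho_clairaut t : 0 <= t -> A (rho t) * A (rho t) * (1 - drho t * drho t) = sin s * sin s.
Proof.
  intro Ht. destruct HA as [HA0 _].
  assert (HAs : A s = sin s) by (apply A_eq_sin; pose proof PI2_3_2; lra).
  set (C := fun t => A (rho t) * A (rho t) * (1 - drho t * drho t)).
  assert (HCd : forall t, derivable_pt_lim C t 0).
  { intro t1. destruct (Hrho t1) as [H1 H2].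
    assert (HAr : derivable_pt_lim (fun y => A (rho y)) t1 (dA (rho t1) * drho t1)).
    { eapply dlim_eq; [apply (dlim_comp A rho); [exact H1 | apply A_derive] | ring]. }
    unfold C. eapply dlim_eq.
    - apply dlim_mult; [apply dlim_mult; exact HAr |].
      apply dlim_minus; [apply dlim_const | apply dlim_mult; exact H2].
    - (* where [A (rho) = 0] the junk value [x / 0 = 0] makes [rho'' = 0] *)
      cbv beta. destruct (Req_dec (A (rho t1)) 0) as [Hz | Hz].
      + rewrite Hz. unfold Rdiv. rewrite Rinv_0. ring.
      + field. exact Hz. }
  change (C t = sin s * sin s).
  rewrite <- HAs, <- Hrho0.
  replace (A (rho 0) * A (rho 0)) with (C 0) by (unfold C; rewrite Hdrho0; ring).
  symmetry. apply (eq_of_derive0_except C 0 t 0); [lra | | auto].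
  intros; eapply dlim_continuity_pt, HCd.
Qed.

Lemma A_rho_neq0 t : 0 <= t -> A (rho t) <> 0.
Proof.
  intros Ht Hz. pose proof (rho_clairaut t Ht) as H. rewrite Hz in H.
  assert (0 < sin s) by (apply sin_gt_0; pose proof PI2_3_2; lra).
  nra.
Qed.

Lemma rho_pos t : 0 <= t -> 0 < rho t.
Proof.
  intro Ht. destruct HA as [HA0 _].
  destruct (Rlt_or_le 0 (rho t)) as [| Hn]; [assumption | exfalso].
  destruct (Req_dec (rho t) 0) as [Hz | Hz].
  - apply (A_rho_neq0 t Ht). now rewrite Hz.
  - assert (Ht0 : 0 < t) by (destruct (Req_dec t 0) as [-> |]; lra).
    destruct (IVT (fun x => - rho x) 0 t
                (fun x => continuity_pt_opp _ _ (rho_continuity_pt x)) Ht0 ltac:(lra) ltac:(lra))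
      as [z [Hz1 Hz2]].
    apply (A_rho_neq0 z ltac:(lra)). replace (rho z) with 0 by lra. exact HA0.
Qed.

Lemma one_minus_drho_sq t : 0 <= t -> 1 - drho t ^ 2 = sin s * sin s / (A (rho t) * A (rho t)).
Proof.
  intro Ht. rewrite <- (rho_clairaut t Ht). field. now apply A_rho_neq0.
Qed.

Lemma drho_sq_lt1 t : 0 <= t -> drho t ^ 2 < 1.
Proof.
  intro Ht. enough (0 < 1 - drho t ^ 2) by lra.
  rewrite (one_minus_drho_sq t Ht). destruct (A_dA_pos (rho t) (rho_pos t Ht)).
  assert (0 < sin s) by (apply sin_gt_0; pose proof PI2_3_2; lra).
  apply Rdiv_lt_0_compat; apply Rmult_lt_0_compat; lra.
Qed.

Lemma drho_nonneg t : 0 <= t -> 0 <= drho t.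
Proof.
  intro Ht. rewrite <- Hdrho0.
  apply (nondecr_of_derive_nonneg_except drho (fun t => dA (rho t) / A (rho t) * (1 - drho t ^ 2))
           0 t 0); [lra | auto using drho_continuity_pt |].
  intros x Hx _. split; [apply Hrho |].
  destruct (A_dA_pos (rho x) (rho_pos x ltac:(lra))). pose proof (drho_sq_lt1 x ltac:(lra)).
  apply Rmult_le_pos; [| lra]. left. now apply Rdiv_lt_0_compat.
Qed.

Lemma rho_nondecr a b : 0 <= a <= b -> rho a <= rho b.
Proof.
  intro Hab. apply (nondecr_of_derive_nonneg_except rho drho a b a); [lra | auto using rho_continuity_pt |].
  intros x Hx _. split; [apply Hrho | apply drho_nonneg; lra].
Qed.

(* The defect from the great-circle law is a first integral while [A = sin]. *)
Lemma cos_rho_geodesic b : 0 <= b -> (forall t, 0 <= t <= b -> rho t < r) ->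
  cos (rho b) = cos s * cos b.
Proof.
  intros Hb Hbelow.
  set (E := fun t => (cos (rho t) - cos s * cos t) * (cos (rho t) - cos s * cos t)
     + (- sin (rho t) * drho t + cos s * sin t) * (- sin (rho t) * drho t + cos s * sin t)).
  assert (HE : E 0 = E b).
  { apply (eq_of_derive0_except E 0 b 0); [lra | |].
    - intros t _. unfold E.
      assert (continuity_pt (fun y => cos (rho y)) t)
        by (apply (continuity_pt_comp rho cos); auto using rho_continuity_pt, continuity_cos).
      assert (continuity_pt (fun y => sin (rho y)) t)
        by (apply (continuity_pt_comp rho sin); auto using rho_continuity_pt, continuity_sin).
      repeat first [ apply continuity_pt_plus | apply continuity_pt_mult
                   | apply continuity_pt_minus | apply continuity_pt_opp ];
        auto using drho_continuity_pt, continuity_cos, continuity_sin, continuity_pt_cst.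
      - intros t Ht _. destruct (Hrho t) as [H1 H2].
      assert (Hr0 : 0 < rho t) by (apply rho_pos; lra).
      pose proof (Hbelow t ltac:(lra)).
      destruct (A_eq_sin (rho t) ltac:(lra)) as [HAt HdAt].
      assert (0 < sin (rho t)) by (apply sin_gt_0; pose proof PI2_3_2; lra).
      assert (Hc : derivable_pt_lim (fun y => cos (rho y)) t (- sin (rho t) * drho t))
        by (eapply dlim_eq; [apply (dlim_comp cos rho); [exact H1 | apply derivable_pt_lim_cos] | ring]).
      assert (Hsn : derivable_pt_lim (fun y => sin (rho y)) t (cos (rho t) * drho t))
        by (eapply dlim_eq; [apply (dlim_comp sin rho); [exact H1 | apply derivable_pt_lim_sin] | ring]).
      unfold E. eapply dlim_eq.
      + apply dlim_plus; apply dlim_mult; try apply dlim_minus; try apply dlim_plus;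
          try apply dlim_mult; try apply dlim_opp;
          eauto using dlim_const, derivable_pt_lim_cos, derivable_pt_lim_sin.
      + cbv beta. rewrite HAt, HdAt. field. lra. }
  unfold E in HE. rewrite Hrho0, Hdrho0, cos_0, sin_0 in HE.
  destruct (sum_sqr_eq0 (cos (rho b) - cos s * cos b) (- sin (rho b) * drho b + cos s * sin b));
    [lra |].
  lra.
Qed.

Lemma rho_ge_r t : 1 <= t -> r <= rho t.
Proof.
  intro Ht. pose proof PI2_3_2.
  apply Rle_trans with (rho 1); [| apply rho_nondecr; lra].
  destruct (Rle_or_lt r (rho 1)) as [| Hlt]; [assumption | exfalso].
  assert (Hbelow : forall t, 0 <= t <= 1 -> rho t < r)
    by (intros t1 Ht1; pose proof (rho_nondecr t1 1 ltac:(lra)); lra).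
  pose proof (cos_rho_geodesic 1 ltac:(lra) Hbelow).
  pose proof (rho_pos 1 ltac:(lra)).
  assert (cos r < cos (rho 1)) by (apply cos_decreasing_1; lra).
  assert (cos 1 < cos r) by (apply cos_decreasing_1; lra).
  assert (0 < cos 1) by (apply cos_gt_0; lra).
  pose proof (COS_bound s). nra.
Qed.

Lemma drho_ge t : 1 <= t -> 9/10 <= drho t.
Proof.
  intro Ht. pose proof PI2_3_2.
  assert (HAr : 1/2 <= A (rho t)).
  { apply Rle_trans with (A r).
    - rewrite (proj1 (A_eq_sin r ltac:(lra))), <- sin_PI6. apply sin_incr_1; lra.
    - apply A_nondecr. pose proof (rho_ge_r t Ht). lra. }
  assert (sin s < 1/100) by (pose proof (sin_lt_x s ltac:(lra)); lra).
  assert (0 < sin s) by (apply sin_gt_0; lra).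
  assert (Hq : sin s * sin s / (A (rho t) * A (rho t)) <= 4 * (sin s * sin s)).
  { apply Rmult_le_reg_r with (A (rho t) * A (rho t)); [nra |].
    unfold Rdiv. rewrite Rmult_assoc, Rinv_l by nra.
    assert (1/4 <= A (rho t) * A (rho t)) by nra. nra. }
  pose proof (one_minus_drho_sq t ltac:(lra)). pose proof (drho_nonneg t ltac:(lra)).
  nra.
Qed.

Lemma rho_escapes t : 11/10 <= t -> r + eps < rho t.
Proof.
  intro Ht.
  assert (rho 1 - 9/10 * 1 <= rho t - 9/10 * t); [| pose proof (rho_ge_r 1 ltac:(lra)); lra].
  apply (nondecr_of_derive_nonneg_except (fun y => rho y - 9/10 * y) (fun y => drho y - 9/10)
           1 t 1); [lra | |].
  - intros y _. apply continuity_pt_minus; [apply rho_continuity_pt |].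
    apply continuity_pt_scal, derivable_continuous_pt, derivable_pt_id.
  - intros y Hy _. split.
    + eapply dlim_eq.
      * apply dlim_minus; [apply Hrho |].
        apply (dlim_mult (fun _ => 9/10) (fun y => y)); [apply dlim_const | apply dlim_id].
      * ring.
    + pose proof (drho_ge y ltac:(lra)). lra.
Qed.

Lemma rho_bounds :
  (forall t, 0 <= t -> 0 < rho t /\ drho t ^ 2 <= 1) /\
  (forall t, 11/10 <= t -> r + eps < rho t /\ 1/2 <= drho t ^ 2).
Proof.
  split; intros t Ht.
  - split; [apply rho_pos | left; apply drho_sq_lt1]; lra.
  - split; [now apply rho_escapes |]. pose proof (drho_ge t ltac:(lra)). nra.
Qed.

End Trajectory.

Lemma is_rho_bounds s rho drho :
  0 <= s < 1/100 -> PI / 6 <= r -> eps < 1/100 -> is_rho A dA s rho drho ->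
  (forall t, 0 < t -> 0 < rho t /\ drho t ^ 2 <= 1) /\
  (forall t, 11/10 <= t -> r + eps < rho t /\ 1/2 <= drho t ^ 2).
Proof.
  intros Hs Hr_lo Heps_small [Hgeo0 Hgeo].
  destruct (Req_dec s 0) as [Hs0 | Hs0].
  - split; intros t Ht; destruct (Hgeo0 Hs0 t) as [-> ->]; lra.
  - destruct (Hgeo ltac:(lra)) as [Hrho0 [Hdrho0 Hrho]].
    destruct (rho_bounds s rho drho ltac:(lra) Hr_lo Heps_small Hrho0 Hdrho0 Hrho)
      as [Hhead Htail].
    split; [intros t Ht; apply Hhead; lra | exact Htail].
Qed.

Lemma curvature_bounds s rho drho :
  0 <= s < 1/100 -> PI / 6 <= r -> eps < 1/100 -> is_rho A dA s rho drho ->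
  (forall t, 11/10 <= t -> Kpar phi r eps (rho t) = -1) /\
  (forall t, 0 < t -> Kmu phi r eps A dA rho drho t <= 1) /\
  (forall t, 11/10 <= t -> Kmu phi r eps A dA rho drho t <= 0).
Proof.
  intros Hs Hr_lo Heps_small Hgeo.
  destruct (is_rho_bounds s rho drho Hs Hr_lo Heps_small Hgeo) as [Hhead Htail].
  assert (Hpar_tail : forall t, 11/10 <= t -> Kpar phi r eps (rho t) = -1)
    by (intros t Ht; apply Kpar_right; [exact Hright | exact Heps | apply Htail, Ht]).
  split; [exact Hpar_tail | split]; intros t Ht; unfold Kmu.
  - destruct (Hhead t Ht) as [Hrt Hd]. pose proof (Kperp_le1 (rho t) Hrt).
    pose proof (Kpar_le1 phi r eps (rho t) Hrange). pose proof (pow2_ge_0 (drho t)). nra.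
  - destruct (Hhead t ltac:(lra)) as [Hrt Hd]. pose proof (Kperp_le1 (rho t) Hrt).
    destruct (Htail t Ht) as [_ Hd2]. rewrite (Hpar_tail t Ht). nra.
Qed.

End Profile.

Lemma PI4_13_15 : PI / 4 <= 13 / 15.
Proof.
  pose proof (PI_ineq 1) as [_ H]. simpl in H. unfold tg_alt, PI_tg in H. simpl in H. lra.
Qed.

Theorem lemma3p16 (phi : R -> R)
  (Hsmooth : smooth phi)
  (Hrange : forall x, 0 <= phi x <= 1)
  (Hleft : forall x, x <= 0 -> phi x = 0)
  (Hright : forall x, 1 <= x -> phi x = 1) :
  exists delta, 0 < delta /\
    forall s r eps, 0 <= s -> 0 <= eps ->
      s < delta -> Rabs (r - PI / 4) < delta -> eps < delta ->
      forall (A dA rho drho Ypar dYpar Yperp dYperp : R -> R),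
        is_A phi r eps A dA ->
        is_rho A dA s rho drho ->
        is_stable eps r s (fun t => Kpar phi r eps (rho t)) Ypar dYpar ->
        is_stable eps r s (Kmu phi r eps A dA rho drho) Yperp dYperp ->
        forall t, 0 <= t ->
          0 < Wnorm Ypar t /\ 0 < Wnorm Yperp t.
Proof.
  exists (1/100). split; [lra |].
  intros s r eps Hs Heps Hs1 Hr Heps1 A dA rho drho Ypar dYpar Yperp dYperp HA Hgeo Hpar Hperp t Ht.
  apply Rabs_def2 in Hr. pose proof PI4_13_15. pose proof PI2_3_2.
  assert (HT : 0 < 11/10 < PI / 2) by lra.
  destruct (curvature_bounds phi r eps A dA Hrange Hleft Hright ltac:(lra) Heps ltac:(lra) HA
              s rho drho ltac:(lra) ltac:(lra) Heps1 Hgeo) as [Hpar_tail [Hmu_head Hmu_tail]].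
  split.
  - apply (is_stable_Wnorm_pos _ _ _ _ _ _ _ HT Hpar); [| | exact Ht].
    + intros. apply Kpar_le1, Hrange.
    + intros t1 Ht1. rewrite (Hpar_tail t1 Ht1). lra.
  - apply (is_stable_Wnorm_pos _ _ _ _ _ _ _ HT Hperp); [| | exact Ht].
    + intros t1 Ht1. apply Hmu_head. lra.
    + exact Hmu_tail.
Qed.
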